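(* Let $R$ be a partial algebra over a commutative ring $k\neq 0$ and let $f\colon R\to k$ be a morphism of partial $k$-algebras. Then for every $r\in R$, the element $r-f(r)\cdot 1\in R$ has no inverse. In particular, if $k$ is a field and $R=\mathrm{M}_n(k)$ (with its standard partial algebra structure), then $f(r)$ is an eigenvalue of $r$ for every $r\in R$.
   Context: A partial $k$-algebra is a set $R$ with a reflexive symmetric relation $\perp$ (commeasurability), partial operations $+,\cdot$ defined on pairs $a\perp b$, scalar multiplication $k\times R\to R$, and elements $0,1$ such that: every $a$ is commeasurable with $0$ and $1$; if $a_1,a_2,a_3$ are pairwise commeasurable and $\lambda\in k$ then $a_1+a_2$, $a_1a_2$, $\lambda a_1$ are commeasurable with $a_3$ (resp. $a_2$); for pairwise commeasurable $a_1,a_2,a_3$ the values of all commutative polynomials in them form a commutative $k$-algebra (so $r-\lambda\cdot 1$ is defined). A full $k$-algebra (such as $k$ or $\mathrm{M}_n(k)$) has the standard partial structure with $a\perp b$ iff $ab=ba$. A morphism $f\colon R\to S$ satisfies, for $a\perp b$, $\lambda\in k$: $f(a)\perp f(b)$, $f(\lambda a)=\lambda f(a)$, $f(a+b)=f(a)+f(b)$, $f(ab)=f(a)f(b)$, $f(0)=0$, $f(1)=1$. An inverse of $x\in R$ is an element $y$ with $x\perp y$ and $xy=1$. *)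

From HB Require Import structures.
From mathcomp Require Import all_boot all_order all_algebra.
Set Implicit Arguments. Unset Strict Implicit. Unset Printing Implicit Defensive.
Import GRing.Theory.
Local Open Scope ring_scope.

(* The partial operations + and * are encoded as total functions on the
   carrier; only their values on commeasurable pairs are ever used
   (all axioms and the morphism conditions only speak about those). *)
Record partialAlg (k : comNzRingType) := PartialAlg {
  pa_car :> Type;
  pa_comm : pa_car -> pa_car -> Prop;
  pa_add : pa_car -> pa_car -> pa_car;
  pa_mul : pa_car -> pa_car -> pa_car;
  pa_scale : k -> pa_car -> pa_car;
  pa_zero : pa_car;
  pa_one : pa_car;
  pa_comm_refl : forall a, pa_comm a a;
  pa_comm_sym : forall a b, pa_comm a b -> pa_comm b a;
  pa_comm0 : forall a, pa_comm a pa_zero;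
  pa_comm1 : forall a, pa_comm a pa_one;
  pa_comm_add : forall a b c, pa_comm a b -> pa_comm b c -> pa_comm a c ->
                pa_comm (pa_add a b) c;
  pa_comm_mul : forall a b c, pa_comm a b -> pa_comm b c -> pa_comm a c ->
                pa_comm (pa_mul a b) c;
  pa_comm_scale : forall l a b, pa_comm a b -> pa_comm (pa_scale l a) b;
  (* for pairwise commeasurable a, b, c the commutative k-algebra laws hold;
     together with the closure axioms this says exactly that the values of
     commutative polynomials in pairwise commeasurable a1,a2,a3 form a
     commutative k-algebra *)
  pa_addA : forall a b c, pa_comm a b -> pa_comm b c -> pa_comm a c ->
            pa_add a (pa_add b c) = pa_add (pa_add a b) c;
  pa_addC : forall a b, pa_comm a b -> pa_add a b = pa_add b a;
  pa_add0 : forall a, pa_add a pa_zero = a;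
  pa_addN : forall a, pa_add a (pa_scale (-1) a) = pa_zero;
  pa_mulA : forall a b c, pa_comm a b -> pa_comm b c -> pa_comm a c ->
            pa_mul a (pa_mul b c) = pa_mul (pa_mul a b) c;
  pa_mulC : forall a b, pa_comm a b -> pa_mul a b = pa_mul b a;
  pa_mul1 : forall a, pa_mul a pa_one = a;
  pa_mulDl : forall a b c, pa_comm a b -> pa_comm b c -> pa_comm a c ->
            pa_mul (pa_add a b) c = pa_add (pa_mul a c) (pa_mul b c);
  pa_scaleDr : forall l a b, pa_comm a b ->
            pa_scale l (pa_add a b) = pa_add (pa_scale l a) (pa_scale l b);
  pa_scaleDl : forall l m a,
            pa_scale (l + m) a = pa_add (pa_scale l a) (pa_scale m a);
  pa_scaleA : forall l m a, pa_scale l (pa_scale m a) = pa_scale (l * m) a;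
  pa_scale1 : forall a, pa_scale 1 a = a;
  pa_scaleAl : forall l a b, pa_comm a b ->
            pa_scale l (pa_mul a b) = pa_mul (pa_scale l a) b
}.

Arguments pa_comm {k} _ _ _.
Arguments pa_add {k} _ _ _.
Arguments pa_mul {k} _ _ _.
Arguments pa_scale {k} _ _ _.
Arguments pa_zero {k} _.
Arguments pa_one {k} _.

Definition pa_sub_scalar {k : comNzRingType} (R : partialAlg k) (r : R) (l : k) : R :=
  pa_add R r (pa_scale R (- l) (pa_one R)).

Definition pa_inverse {k : comNzRingType} (R : partialAlg k) (x y : R) : Prop :=
  pa_comm R x y /\ pa_mul R x y = pa_one R.

Definition pa_morph {k : comNzRingType} (R S : partialAlg k) (f : R -> S) : Prop :=
  [/\ forall a b, pa_comm R a b ->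
        [/\ pa_comm S (f a) (f b),
            f (pa_add R a b) = pa_add S (f a) (f b) &
            f (pa_mul R a b) = pa_mul S (f a) (f b)],
      forall l a, f (pa_scale R l a) = pa_scale S l (f a),
      f (pa_zero R) = pa_zero S &
      f (pa_one R) = pa_one S].

Section KPalg.
Variable k : comNzRingType.

Definition k_palg : partialAlg k :=
  @PartialAlg k k (fun a b => a * b = b * a) +%R *%R *%R 0 1
    (fun a => erefl) (fun a b h => esym h)
    (fun a => mulrC _ _) (fun a => mulrC _ _)
    (fun a b c _ _ _ => mulrC _ _) (fun a b c _ _ _ => mulrC _ _)
    (fun l a b _ => mulrC _ _)
    (fun a b c _ _ _ => addrA _ _ _) (fun a b _ => addrC _ _)
    (fun a => addr0 _) (fun a => ltac:(by rewrite mulN1r subrr))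
    (fun a b c _ _ _ => mulrA _ _ _) (fun a b _ => mulrC _ _)
    (fun a => mulr1 _) (fun a b c _ _ _ => mulrDl _ _ _)
    (fun l a b _ => mulrDr _ _ _) (fun l m a => mulrDl _ _ _)
    (fun l m a => mulrA _ _ _) (fun a => mul1r _)
    (fun l a b _ => mulrA _ _ _).
End KPalg.

Section MxPalg.
Variables (F : fieldType) (n : nat).
Local Notation M := 'M[F]_n.

Definition mx_comm (A B : M) : Prop := A *m B = B *m A.

Lemma mx_comm_add (A B C : M) : mx_comm A B -> mx_comm B C -> mx_comm A C ->
  mx_comm (A + B) C.
Proof. by rewrite /mx_comm => _ h1 h2; rewrite mulmxDl mulmxDr h1 h2. Qed.

Lemma mx_comm_mul (A B C : M) : mx_comm A B -> mx_comm B C -> mx_comm A C ->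
  mx_comm (A *m B) C.
Proof. by rewrite /mx_comm => _ h1 h2; rewrite -mulmxA h1 mulmxA h2 mulmxA. Qed.

Lemma mx_comm_scale l (A B : M) : mx_comm A B -> mx_comm (l *: A) B.
Proof. by rewrite /mx_comm => h; rewrite -scalemxAl h scalemxAr. Qed.

Lemma mx_comm0 (A : M) : mx_comm A 0.
Proof. by rewrite /mx_comm mulmx0 mul0mx. Qed.

Lemma mx_comm1 (A : M) : mx_comm A 1%:M.
Proof. by rewrite /mx_comm mulmx1 mul1mx. Qed.

Lemma mx_addN (A : M) : A + (-1) *: A = 0.
Proof. by rewrite scaleN1r subrr. Qed.

Definition mx_palg : partialAlg F :=
  @PartialAlg F M mx_comm +%R (@mulmx F n n n) (@GRing.scale F _) 0 1%:M
    (fun a => erefl) (fun a b h => esym h)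
    mx_comm0 mx_comm1 mx_comm_add mx_comm_mul mx_comm_scale
    (fun a b c _ _ _ => addrA _ _ _) (fun a b _ => addrC _ _)
    (fun a => addr0 _) mx_addN
    (fun a b c _ _ _ => mulmxA _ _ _) (fun a b h => h)
    (fun a => mulmx1 _) (fun a b c _ _ _ => mulmxDl _ _ _)
    (fun l a b _ => scalerDr _ _ _) (fun l m a => scalerDl _ _ _)
    (fun l m a => scalerA _ _ _) (fun a => scale1r _)
    (fun l a b _ => scalemxAl _ _ _).
End MxPalg.

From mathcomp Require Import all_boot all_order all_algebra.
Set Implicit Arguments. Unset Strict Implicit. Unset Printing Implicit Defensive.
Local Open Scope ring_scope.
Import GRing.Theory.

(* A morphism [f] into [k] sends [r - f(r)·1] to [f r - f r = 0]; a morphism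
   sends an inverse pair to elements with product [1] in [k], and [0 * y = 1]
   is impossible since [k] is nontrivial. For matrices, [r - f(r)·1] is the
   matrix [r - (f r)%:M], which is singular exactly when [f r] is an
   eigenvalue. *)

Section MorphismToScalars.
Variables (k : comNzRingType) (R : partialAlg k) (f : R -> k_palg k).
Hypothesis f_morph : pa_morph f.

Lemma pa_comm_scale1 (r : R) (l : k) : pa_comm R r (pa_scale R l (pa_one R)).
Proof. by apply/pa_comm_sym/pa_comm_scale/pa_comm_sym/pa_comm1. Qed.

Lemma morph_sub_scalar (r : R) (l : k) : f (pa_sub_scalar r l) = f r - l.
Proof.
have [f_op f_scale _ f_one] := f_morph.
have [_ -> _] := f_op _ _ (pa_comm_scale1 r (- l)).
by rewrite f_scale f_one /= mulr1.
Qed.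

Lemma morph_inverse (x y : R) : pa_inverse x y -> f x * f y = 1.
Proof.
case=> xy_comm xy1; have [f_op _ _ f_one] := f_morph.
have [_ _ f_mul] := f_op _ _ xy_comm.
by rewrite -[RHS]f_one -xy1 f_mul.
Qed.

Lemma morph_sub_scalar_not_invertible (r : R) :
  ~ exists y : R, pa_inverse (pa_sub_scalar r (f r)) y.
Proof.
case=> y /morph_inverse; rewrite morph_sub_scalar subrr mul0r.
by move/eqP; rewrite eq_sym oner_eq0.
Qed.

End MorphismToScalars.

Lemma mx_sub_scalar (F : fieldType) (n : nat) (r : 'M[F]_n) (l : F) :
  pa_sub_scalar (R := mx_palg F n) r l = r - l%:M.
Proof. by rewrite /pa_sub_scalar /= scalemx1 raddfN. Qed.

Lemma mx_unit_inverse (F : fieldType) (n : nat) (A : 'M[F]_n) :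
  A \in unitmx -> pa_inverse (R := mx_palg F n) A (invmx A).
Proof. by move=> A_unit; split; rewrite /= ?/mx_comm mulmxV ?mulVmx. Qed.

Lemma eigenvalue_unitmx (F : fieldType) (n : nat) (r : 'M[F]_n) (l : F) :
  eigenvalue r l = (r - l%:M \notin unitmx).
Proof. by rewrite /eigenvalue /eigenspace kermx_eq0 row_free_unit. Qed.

Theorem lemma3p3 :
  (forall (k : comNzRingType) (R : partialAlg k) (f : R -> k_palg k),
     pa_morph f ->
     forall r : R, ~ exists y : R, pa_inverse (pa_sub_scalar r (f r)) y)
  /\
  (forall (F : fieldType) (n : nat) (f : mx_palg F n -> k_palg F),
     pa_morph f ->
     forall r : 'M[F]_n, eigenvalue r (f r)).
Proof.
split=> [k R f f_morph r | F n f f_morph r].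
  exact: morph_sub_scalar_not_invertible.
rewrite eigenvalue_unitmx; apply/negP => r_unit.
apply: (morph_sub_scalar_not_invertible f_morph (r := r)).
exists (invmx (r - (f r)%:M)); rewrite mx_sub_scalar.
exact: mx_unit_inverse.
Qed.
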